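(* Let $(r_{i,j})_{i\ge 0,\, j\in\mathbb{Z}}$ be the Pascal rhombus, defined by $r_{0,0}=r_{1,-1}=r_{1,0}=r_{1,1}=1$, $r_{0,j}=0$ for $j\neq 0$, $r_{1,j}=0$ for $j\notin\{-1,0,1\}$, and $$r_{i,j}=r_{i-1,j-1}+r_{i-1,j}+r_{i-1,j+1}+r_{i-2,j}\quad (i\ge 2,\ j\in\mathbb{Z}).$$ For $n\ge 0$ and $j\in\mathbb{Z}$, let $g^{(2)}_{n,j}$ be the number of 2-generalized grand Motzkin paths of length $n$ and height $j$. Then $r_{n,j}=g^{(2)}_{n,j}$ for all $n\ge 0$, $j\in\mathbb{Z}$.
   Context: A 2-generalized grand Motzkin path of length $n$ is a lattice path in $\mathbb{Z}\times\mathbb{Z}$ starting at $(0,0)$ and ending at a point with $x$-coordinate $n$, using steps $U=(1,1)$, $D=(1,-1)$, $H=(1,0)$ and $H_2=(2,0)$, with no restriction of staying above the $x$-axis. Its height is its final $y$-coordinate. *)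

From Stdlib Require Import Bool ZArith List Lia.
Import ListNotations.
Open Scope Z_scope.

Inductive step := U | D | H | H2.

Definition all_steps : list step := [U; D; H; H2].

Definition dx (s : step) : nat := match s with U | D | H => 1%nat | H2 => 2%nat end.
Definition dy (s : step) : Z := match s with U => 1 | D => -1 | H | H2 => 0 end.

Definition path_length (p : list step) : nat := fold_right (fun s a => (dx s + a)%nat) 0%nat p.
Definition path_height (p : list step) : Z := fold_right (fun s a => dy s + a) 0 p.

Fixpoint all_lists (k : nat) : list (list step) :=
  match k with
  | O => [[]]
  | S k' => flat_map (fun s => map (cons s) (all_lists k')) all_steps
  end.

(* every path of length n has at most n steps (each step has dx >= 1);
   all_lists k enumerates every sequence of k steps exactly once *)
Definition all_paths_upto (n : nat) : list (list step) :=
  flat_map all_lists (seq 0 (S n)).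

Definition gmotzkin2 (n : nat) (j : Z) : nat :=
  length (filter (fun p => Nat.eqb (path_length p) n && Z.eqb (path_height p) j)%bool
                 (all_paths_upto n)).

(* Pascal rhombus: rows i and i+1 computed together *)
Fixpoint rhombus_pair (i : nat) : (Z -> nat) * (Z -> nat) :=
  match i with
  | O => (fun j => if Z.eqb j 0 then 1%nat else 0%nat,
          fun j => if (Z.leb (-1) j && Z.leb j 1)%bool then 1%nat else 0%nat)
  | S i' => let (a, b) := rhombus_pair i' in
            (b, fun j : Z => (b (j - 1)%Z + b j + b (j + 1)%Z + a j)%nat)
  end.

Definition rhombus (i : nat) (j : Z) : nat := fst (rhombus_pair i) j.

Lemma rhombus_rec (i : nat) (j : Z) :
  rhombus (S (S i)) j =
  (rhombus (S i) (j - 1) + rhombus (S i) j + rhombus (S i) (j + 1) + rhombus i j)%nat.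
Proof.
  unfold rhombus. simpl. destruct (rhombus_pair i) as [a b]. simpl. reflexivity.
Qed.

(* Count the paths by their number of steps (which is how [all_lists] enumerates them) and
   split off the first step: a path of length n+2 and height j starts with U, D or H followed
   by a path of length n+1 and height j-1, j+1 or j respectively, or with H2 followed by a path of length n
   and height j.  So g^(2) obeys the recurrence of the rhombus, and the first two rows agree
   by computation. *)

From Stdlib Require Import ZArith.
From Stdlib Require Import List Lia.
Import ListNotations.

Lemma length_filter_flat_map {A B} (P : B -> bool) (f : A -> list B) (l : list A) :
  length (filter P (flat_map f l)) = list_sum (map (fun x => length (filter P (f x))) l).
Proof.
  induction l as [|x l IHl]; [reflexivity|].
  cbn. rewrite filter_app, length_app, IHl. reflexivity.
Qed.

Lemma list_sum_map_add {A} (f g : A -> nat) (l : list A) :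
  (list_sum (map (fun x => f x + g x) l) = list_sum (map f l) + list_sum (map g l))%nat.
Proof.
  induction l as [|x l IHl]; [reflexivity|].
  change (f x + g x + list_sum (map (fun x => f x + g x) l)
          = f x + list_sum (map f l) + (g x + list_sum (map g l)))%nat.
  rewrite IHl. lia.
Qed.

Lemma two_step_ind (P : nat -> Prop) :
  P 0%nat -> P 1%nat -> (forall n, P n -> P (S n) -> P (S (S n))) -> forall n, P n.
Proof.
  intros P0 P1 PSS n.
  enough (P n /\ P (S n)) by tauto.
  induction n as [|n [Pn PSn]]; auto.
Qed.

Lemma length_all_lists k p : In p (all_lists k) -> length p = k.
Proof.
  revert p; induction k as [|k IHk]; intros p Hp.
  - destruct Hp as [<-|[]]; reflexivity.
  - cbn [all_lists] in Hp. apply in_flat_map in Hp as [s [_ Hs]].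
    apply in_map_iff in Hs as [q [<- Hq]]. cbn. rewrite (IHk q Hq). reflexivity.
Qed.

Lemma length_all_lists_succ (P : list step -> bool) k :
  length (filter P (all_lists (S k))) =
  list_sum (map (fun s => length (filter (fun p => P (s :: p)) (all_lists k))) all_steps).
Proof.
  cbn [all_lists]. rewrite length_filter_flat_map.
  apply f_equal, map_ext. intros s. rewrite filter_map_swap, length_map. reflexivity.
Qed.

Lemma length_le_path_length p : (length p <= path_length p)%nat.
Proof.
  induction p as [|s p IH]; [cbn; lia|].
  change (S (length p) <= dx s + path_length p)%nat. destruct s; cbn [dx]; lia.
Qed.

Definition ends_at (n : nat) (j : Z) (p : list step) : bool :=
  Nat.eqb (path_length p) n && Z.eqb (path_height p) j.

Lemma ends_at_cons s n j (Hs : (dx s <= n)%nat) p :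
  ends_at n j (s :: p) = ends_at (n - dx s) (j - dy s) p.
Proof.
  unfold ends_at. cbn [path_length path_height fold_right]. fold (path_length p) (path_height p).
  destruct (Nat.eqb_spec (dx s + path_length p) n), (Nat.eqb_spec (path_length p) (n - dx s));
    destruct (Z.eqb_spec (dy s + path_height p) j), (Z.eqb_spec (path_height p) (j - dy s));
    cbn; lia.
Qed.

Definition gmotzkin2_steps (k n : nat) (j : Z) : nat :=
  length (filter (ends_at n j) (all_lists k)).

Lemma gmotzkin2_steps_gt k n j : (n < k)%nat -> gmotzkin2_steps k n j = 0%nat.
Proof.
  intros Hnk. unfold gmotzkin2_steps.
  rewrite (filter_ext_in _ (fun _ => false)), filter_false; [reflexivity|].
  intros p Hp. apply length_all_lists in Hp. pose proof (length_le_path_length p).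
  unfold ends_at. destruct (Nat.eqb_spec (path_length p) n); [lia|reflexivity].
Qed.

Lemma gmotzkin2_steps_succ k n j :
  gmotzkin2_steps (S k) (S (S n)) j =
  (gmotzkin2_steps k (S n) (j - 1) + gmotzkin2_steps k (S n) j
   + gmotzkin2_steps k (S n) (j + 1) + gmotzkin2_steps k n j)%nat.
Proof.
  unfold gmotzkin2_steps. rewrite length_all_lists_succ. cbn [all_steps map list_sum].
  rewrite (filter_ext _ _ (ends_at_cons U (S (S n)) j ltac:(cbn; lia))),
    (filter_ext _ _ (ends_at_cons D (S (S n)) j ltac:(cbn; lia))),
    (filter_ext _ _ (ends_at_cons H (S (S n)) j ltac:(cbn; lia))),
    (filter_ext _ _ (ends_at_cons H2 (S (S n)) j ltac:(cbn; lia))).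
  cbn [dx dy Nat.sub list_sum fold_right].
  replace (j - -1)%Z with (j + 1)%Z by lia. rewrite Z.sub_0_r, Nat.sub_0_r. lia.
Qed.

Lemma gmotzkin2_sum_steps n j M : (n < M)%nat ->
  gmotzkin2 n j = list_sum (map (fun k => gmotzkin2_steps k n j) (seq 0 M)).
Proof.
  induction 1 as [|M HnM IH].
  - unfold gmotzkin2, all_paths_upto. apply length_filter_flat_map.
  - rewrite seq_S, map_app, list_sum_app, <- IH. cbn [map].
    rewrite gmotzkin2_steps_gt by lia. cbn. lia.
Qed.

Lemma gmotzkin2_rec n j :
  gmotzkin2 (S (S n)) j =
  (gmotzkin2 (S n) (j - 1) + gmotzkin2 (S n) j + gmotzkin2 (S n) (j + 1) + gmotzkin2 n j)%nat.
Proof.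
  rewrite (gmotzkin2_sum_steps (S (S n)) j (S (S (S n)))) by lia.
  rewrite !(gmotzkin2_sum_steps _ _ (S (S n))) by lia.
  change (seq 0 (S (S (S n)))) with ([0%nat] ++ seq 1 (S (S n))).
  rewrite map_app, list_sum_app, <- seq_shift, map_map.
  change (list_sum (map _ [0%nat])) with 0%nat.
  rewrite (map_ext _ _ (fun k => gmotzkin2_steps_succ k n j)), !list_sum_map_add.
  lia.
Qed.

Theorem theorem2p3 : forall (n : nat) (j : Z), rhombus n j = gmotzkin2 n j.
Proof.
  apply (two_step_ind (fun n => forall j, rhombus n j = gmotzkin2 n j)).
  (* j = 0, j = +-1 and |j| >= 2 (j otherwise symbolic): both sides compute *)
  1, 2: intros j; destruct j as [|[q|q|]|[q|q|]]; reflexivity.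
  - intros n IHn IHSn j. rewrite rhombus_rec, gmotzkin2_rec, !IHSn, IHn. reflexivity.
Qed.
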